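(* Let $P_1,Q_1\in GL(2,\mathbb R)$, where $P_1$ has the pair of complex conjugate eigenvalues $\cos\alpha\pm i\sin\alpha$ with $\alpha\in(-\pi/2,\pi/2]$ and $\alpha/\pi\notin\mathbb Q$. If $f\colon\overline{\mathbb R}\to\overline{\mathbb R}$ is a homeomorphism with $f(P_1(x))=Q_1(f(x))$ for all $x\in\overline{\mathbb R}$, then $f$ is a nondegenerate linear-fractional transformation, i.e. $f(x)=\frac{ax+b}{cx+d}$ for some real $a,b,c,d$ with $ad-bc\neq0$.
   Context: $\overline{\mathbb R}=\mathbb R\cup\{\infty\}$. A matrix $\begin{pmatrix}a&b\\c&d\end{pmatrix}\in GL(2,\mathbb R)$ acts on $\overline{\mathbb R}$ by $x\mapsto\frac{ax+b}{cx+d}$. *)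

From Stdlib Require Import Reals.
Open Scope R_scope.

(* The extended real line R ∪ {∞}: [Some x] is the real x, [None] is ∞. *)
Definition Rbar := option R.

Definition mobius (a b c d : R) (x : Rbar) : Rbar :=
  match x with
  | Some t => if Req_EM_T (c * t + d) 0 then None
              else Some ((a * t + b) / (c * t + d))
  | None => if Req_EM_T c 0 then None else Some (a / c)
  end.

(* Topology of Rbar = one-point compactification of R. *)
Definition open_R (U : R -> Prop) : Prop :=
  forall x, U x -> exists eps, 0 < eps /\ forall y, Rabs (y - x) < eps -> U y.

Definition open_Rbar (U : Rbar -> Prop) : Prop :=
  open_R (fun x => U (Some x)) /\
  (U None -> exists M, forall x, M < Rabs x -> U (Some x)).

Definition continuous_Rbar (f : Rbar -> Rbar) : Prop :=
  forall U, open_Rbar U -> open_Rbar (fun x => U (f x)).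

Definition homeomorphism_Rbar (f : Rbar -> Rbar) : Prop :=
  exists g : Rbar -> Rbar,
    (forall x, g (f x) = x) /\ (forall y, f (g y) = y) /\
    continuous_Rbar f /\ continuous_Rbar g.

(* u + i v is a (complex) eigenvalue of the real matrix [[a b];[c d]]:
   there is a nonzero z = (x1 + i y1, x2 + i y2) in C^2 with M z = (u + i v) z,
   written out in real and imaginary parts. *)
Definition complex_eigenvalue (a b c d u v : R) : Prop :=
  exists x1 y1 x2 y2 : R,
    ~ (x1 = 0 /\ y1 = 0 /\ x2 = 0 /\ y2 = 0) /\
    a * x1 + b * x2 = u * x1 - v * y1 /\
    a * y1 + b * y2 = u * y1 + v * x1 /\
    c * x1 + d * x2 = u * x2 - v * y2 /\
    c * y1 + d * y2 = u * y2 + v * x2.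

Definition rational (r : R) : Prop :=
  exists p q : Z, (q <> 0)%Z /\ r = IZR p / IZR q.

(* P1 and Q1 are both conjugate, by Moebius maps S and T, to rotations of
   Rbar = R / PI Z: P1 through its complex eigenvector, Q1 because, like P1, it has no
   fixed point. Then h = T^-1 f S is a homeomorphism conjugating the rotation by alpha
   to a rotation by some beta. Up to one more rotation h fixes infinity, and up to
   x |-> -x it preserves orientation. Such an h preserves the cyclic order of the orbit
   of infinity, which forces beta = alpha mod PI; so h fixes that orbit pointwise, and
   the orbit is dense since alpha / PI is irrational, whence h is the identity. *)

From Stdlib Require Import Reals Lra Lia Psatz ZArith Classical FunctionalExtensionality.
Open Scope R_scope.

Definition proj_point (w1 w2 : R) : Rbar :=
  if Req_EM_T w2 0 then None else Some (w1 / w2).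

Definition is_mobius (h : Rbar -> Rbar) : Prop :=
  exists a b c d : R, a * d - b * c <> 0 /\ forall z, h z = mobius a b c d z.

Lemma mobius_proj_point a b c d w1 w2 : ~ (w1 = 0 /\ w2 = 0) ->
  mobius a b c d (proj_point w1 w2) = proj_point (a * w1 + b * w2) (c * w1 + d * w2).
Proof.
  intros Hw; unfold proj_point, mobius.
  destruct (Req_EM_T w2 0) as [E|E].
  - subst w2. assert (w1 <> 0) by tauto.
    replace (a * w1 + b * 0) with (a * w1) by ring.
    replace (c * w1 + d * 0) with (c * w1) by ring.
    destruct (Req_EM_T c 0) as [Ec|Ec]; destruct (Req_EM_T (c * w1) 0) as [Ecw|Ecw].
    + reflexivity.
    + subst c. exfalso. apply Ecw. ring.
    + exfalso. destruct (Rmult_integral _ _ Ecw); auto.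
    + f_equal. field. auto.
  - destruct (Req_EM_T (c * (w1 / w2) + d) 0) as [E1|E1];
      destruct (Req_EM_T (c * w1 + d * w2) 0) as [E2|E2].
    + reflexivity.
    + exfalso. apply E2.
      replace (c * w1 + d * w2) with ((c * (w1 / w2) + d) * w2) by (field; auto).
      rewrite E1. ring.
    + exfalso. apply E1.
      replace (c * (w1 / w2) + d) with ((c * w1 + d * w2) / w2) by (field; auto).
      rewrite E2. field. auto.
    + f_equal. field. auto.
Qed.

Lemma proj_point_scale l w1 w2 : l <> 0 -> proj_point (l * w1) (l * w2) = proj_point w1 w2.
Proof.
  intros Hl; unfold proj_point.
  destruct (Req_EM_T (l * w2) 0) as [E|E]; destruct (Req_EM_T w2 0) as [E2|E2].
  - reflexivity.
  - exfalso. destruct (Rmult_integral _ _ E); auto.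
  - exfalso. subst w2. apply E. ring.
  - f_equal. field. auto.
Qed.

Lemma proj_point_surj z : exists w1 w2, ~ (w1 = 0 /\ w2 = 0) /\ z = proj_point w1 w2.
Proof.
  destruct z as [r|].
  - exists r, 1. split; [lra|]. unfold proj_point.
    destruct (Req_EM_T 1 0); [lra|]. f_equal. field.
  - exists 1, 0. split; [lra|]. unfold proj_point.
    destruct (Req_EM_T 0 0); [reflexivity|lra].
Qed.

Lemma mat_vec_neq0 a b c d w1 w2 : a * d - b * c <> 0 -> ~ (w1 = 0 /\ w2 = 0) ->
  ~ (a * w1 + b * w2 = 0 /\ c * w1 + d * w2 = 0).
Proof.
  intros Hdet Hw [H1 H2]. apply Hw.
  assert (E1 : (a * d - b * c) * w1 = 0).
  { replace ((a * d - b * c) * w1) with (d * (a * w1 + b * w2) - b * (c * w1 + d * w2)) by ring.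
    rewrite H1, H2. ring. }
  assert (E2 : (a * d - b * c) * w2 = 0).
  { replace ((a * d - b * c) * w2) with (a * (c * w1 + d * w2) - c * (a * w1 + b * w2)) by ring.
    rewrite H1, H2. ring. }
  destruct (Rmult_integral _ _ E1); [tauto|]. destruct (Rmult_integral _ _ E2); [tauto|]. auto.
Qed.

Lemma mobius_comp a b c d a' b' c' d' z : a' * d' - b' * c' <> 0 ->
  mobius a b c d (mobius a' b' c' d' z) =
  mobius (a * a' + b * c') (a * b' + b * d') (c * a' + d * c') (c * b' + d * d') z.
Proof.
  intros Hdet. destruct (proj_point_surj z) as [w1 [w2 [Hw ->]]].
  rewrite (mobius_proj_point a' b' c' d') by auto.
  rewrite mobius_proj_point by (apply mat_vec_neq0; auto).
  rewrite mobius_proj_point by auto.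
  f_equal; ring.
Qed.

Lemma mobius_scalar l z : l <> 0 -> mobius l 0 0 l z = z.
Proof.
  intros Hl. destruct (proj_point_surj z) as [w1 [w2 [Hw ->]]].
  rewrite mobius_proj_point by auto.
  replace (l * w1 + 0 * w2) with (l * w1) by ring.
  replace (0 * w1 + l * w2) with (l * w2) by ring.
  apply proj_point_scale; auto.
Qed.

Lemma is_mobius_id : is_mobius (fun z => z).
Proof.
  exists 1, 0, 0, 1. split; [lra|]. intros z. symmetry. apply mobius_scalar. lra.
Qed.

Lemma is_mobius_comp h1 h2 : is_mobius h1 -> is_mobius h2 -> is_mobius (fun z => h1 (h2 z)).
Proof.
  intros [a [b [c [d [Hd H1]]]]] [a' [b' [c' [d' [Hd' H2]]]]].
  exists (a * a' + b * c'), (a * b' + b * d'), (c * a' + d * c'), (c * b' + d * d'). split.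
  - replace ((a * a' + b * c') * (c * b' + d * d') - (a * b' + b * d') * (c * a' + d * c'))
      with ((a * d - b * c) * (a' * d' - b' * c')) by ring.
    apply Rmult_integral_contrapositive. auto.
  - intros z. rewrite H1, H2. apply mobius_comp. auto.
Qed.

Lemma is_mobius_inv h : is_mobius h ->
  exists h', is_mobius h' /\ (forall z, h' (h z) = z) /\ (forall z, h (h' z) = z).
Proof.
  intros [a [b [c [d [Hd H]]]]].
  exists (mobius d (- b) (- c) a). split; [|split].
  - exists d, (- b), (- c), a. split; [intro; apply Hd; lra|reflexivity].
  - intros z. rewrite H, mobius_comp by auto.
    replace (d * a + - b * c) with (a * d - b * c) by ring.
    replace (d * b + - b * d) with 0 by ring.
    replace (- c * a + a * c) with 0 by ring.
    replace (- c * b + a * d) with (a * d - b * c) by ring.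
    apply mobius_scalar. auto.
  - intros z. rewrite H, mobius_comp by (intro; apply Hd; lra).
    replace (a * d + b * - c) with (a * d - b * c) by ring.
    replace (a * - b + b * a) with 0 by ring.
    replace (c * d + d * - c) with 0 by ring.
    replace (c * - b + d * a) with (a * d - b * c) by ring.
    apply mobius_scalar. auto.
Qed.

(* [angle_point] is the covering map R -> Rbar of period PI, with [angle_point 0 = None]. *)
Definition angle_point (t : R) : Rbar := proj_point (cos t) (sin t).

Definition rot (g : R) : Rbar -> Rbar := mobius (cos g) (- sin g) (sin g) (cos g).

Definition Rbar_opp (z : Rbar) : Rbar :=
  match z with Some x => Some (- x) | None => None end.

Lemma cos_sin_not_both_0 t : ~ (cos t = 0 /\ sin t = 0).
Proof. intros [H1 H2]. pose proof (sin2_cos2 t) as H. unfold Rsqr in H. rewrite H1, H2 in H. lra. Qed.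

Lemma angle_point_surj z : exists t, z = angle_point t.
Proof.
  destruct z as [r|].
  - exists (PI / 2 - atan r). unfold angle_point, proj_point. rewrite sin_shift, cos_shift.
    pose proof (atan_bound r). assert (0 < cos (atan r)) by (apply cos_gt_0; lra).
    destruct (Req_EM_T (cos (atan r)) 0); [lra|]. f_equal.
    rewrite <- (atan_right_inv r) at 1. reflexivity.
  - exists 0. unfold angle_point, proj_point. rewrite sin_0.
    destruct (Req_EM_T 0 0); [reflexivity|lra].
Qed.

Lemma angle_point_None t : angle_point t = None <-> sin t = 0.
Proof.
  unfold angle_point, proj_point.
  destruct (Req_EM_T (sin t) 0); split; intros; auto; try discriminate; contradiction.
Qed.

Lemma angle_point_0 : angle_point 0 = None.
Proof. apply angle_point_None, sin_0. Qed.

Lemma angle_point_period t (z : Z) : angle_point (t + IZR z * PI) = angle_point t.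
Proof.
  assert (HPI : forall s, angle_point (s + PI) = angle_point s).
  { intros s. unfold angle_point. rewrite neg_cos, neg_sin.
    replace (- cos s) with (-1 * cos s) by ring. replace (- sin s) with (-1 * sin s) by ring.
    apply proj_point_scale. lra. }
  assert (Hnat : forall (n : nat) s, angle_point (s + INR n * PI) = angle_point s).
  { induction n as [|n IH]; intros s.
    - simpl. f_equal. ring.
    - rewrite S_INR. replace (s + (INR n + 1) * PI) with ((s + INR n * PI) + PI) by ring.
      rewrite HPI. apply IH. }
  destruct z as [|p|p].
  - simpl. f_equal. ring.
  - rewrite <- positive_nat_Z, <- INR_IZR_INZ. apply Hnat.
  - rewrite <- (Hnat (Pos.to_nat p) (t + IZR (Z.neg p) * PI)). f_equal.
    rewrite INR_IZR_INZ, positive_nat_Z, <- Pos2Z.opp_pos, opp_IZR. ring.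
Qed.

Lemma rot_angle_point g t : rot g (angle_point t) = angle_point (t + g).
Proof.
  unfold rot, angle_point. rewrite mobius_proj_point by apply cos_sin_not_both_0.
  rewrite cos_plus, sin_plus. f_equal; ring.
Qed.

Lemma rot_comp a b z : rot a (rot b z) = rot (a + b) z.
Proof.
  destruct (angle_point_surj z) as [t ->]. rewrite !rot_angle_point. f_equal. ring.
Qed.

Lemma rot_0 z : rot 0 z = z.
Proof.
  destruct (angle_point_surj z) as [t ->]. rewrite rot_angle_point, Rplus_0_r. reflexivity.
Qed.

Lemma rot_cancel a z : rot a (rot (- a) z) = z.
Proof. rewrite rot_comp, Rplus_opp_r. apply rot_0. Qed.

Lemma rot_no_fixed_point g z : sin g <> 0 -> rot g z <> z.
Proof.
  intros Hg Hz. destruct (angle_point_surj z) as [t ->].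
  rewrite rot_angle_point in Hz. apply (f_equal (rot (- t))) in Hz.
  rewrite !rot_angle_point in Hz. replace (t + g + - t) with g in Hz by ring.
  rewrite Rplus_opp_r, angle_point_0 in Hz. apply angle_point_None in Hz. auto.
Qed.

Lemma is_mobius_rot g : is_mobius (rot g).
Proof.
  exists (cos g), (- sin g), (sin g), (cos g). split; [|reflexivity].
  pose proof (sin2_cos2 g) as H. unfold Rsqr in H. lra.
Qed.

Lemma Rbar_opp_angle_point t : Rbar_opp (angle_point t) = angle_point (- t).
Proof.
  unfold angle_point, proj_point. rewrite cos_neg, sin_neg.
  destruct (Req_EM_T (sin t) 0) as [E|E]; destruct (Req_EM_T (- sin t) 0) as [E'|E'];
    try lra; simpl; try reflexivity.
  f_equal. field. auto.
Qed.

Lemma Rbar_opp_rot g z : Rbar_opp (rot g z) = rot (- g) (Rbar_opp z).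
Proof.
  destruct (angle_point_surj z) as [t ->].
  rewrite rot_angle_point, !Rbar_opp_angle_point, rot_angle_point. f_equal. ring.
Qed.

Lemma is_mobius_Rbar_opp : is_mobius Rbar_opp.
Proof.
  exists (-1), 0, 0, 1. split; [lra|]. intros [x|]; simpl.
  - destruct (Req_EM_T (0 * x + 1) 0); [lra|]. f_equal. field.
  - destruct (Req_EM_T 0 0); [reflexivity|lra].
Qed.

Lemma ratfun_near a b c d x eps : c * x + d <> 0 -> 0 < eps ->
  exists del, 0 < del /\ forall y, Rabs (y - x) < del ->
    c * y + d <> 0 /\ Rabs ((a * y + b) / (c * y + d) - (a * x + b) / (c * x + d)) < eps.
Proof.
  intros Hx He.
  assert (Hden : 0 < Rabs (c * x + d)) by (apply Rabs_pos_lt; auto).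
  assert (Hcont : continuity_pt (fun y => (a * y + b) / (c * y + d)) x) by (reg; auto).
  assert (Hcont' : continuity_pt (fun y => c * y + d) x) by reg.
  destruct (Hcont eps He) as [d1 [Hd1 H1]].
  destruct (Hcont' _ Hden) as [d2 [Hd2 H2]].
  exists (Rmin d1 d2). split; [apply Rmin_pos; auto|].
  intros y Hy. pose proof (Rmin_l d1 d2). pose proof (Rmin_r d1 d2).
  destruct (Req_dec y x) as [->|Hne].
  { split; auto. unfold Rminus. rewrite Rplus_opp_r, Rabs_R0. auto. }
  assert (Hyx : D_x no_cond x y /\ R_dist y x < d1 /\ R_dist y x < d2).
  { unfold D_x, no_cond, R_dist. repeat split; auto; lra. }
  destruct Hyx as [Hyx [Hyd1 Hyd2]].
  split.
  - intro E. specialize (H2 y (conj Hyx Hyd2)). simpl in H2. unfold R_dist in H2.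
    rewrite E, Rminus_0_l, Rabs_Ropp in H2. lra.
  - apply (H1 y (conj Hyx Hyd1)).
Qed.

Lemma Rabs_inv_gt r M : r <> 0 -> Rabs r < / (Rabs M + 1) -> M < Rabs (/ r).
Proof.
  intros Hr H. rewrite Rabs_inv. pose proof (Rabs_pos_lt r Hr).
  pose proof (RRle_abs M). pose proof (Rabs_pos M).
  apply Rlt_le_trans with (Rabs M + 1); [lra|].
  rewrite <- (Rinv_inv (Rabs M + 1)). apply Rinv_le_contravar; lra.
Qed.

Lemma mobius_open_real a b c d U : a * d - b * c <> 0 -> open_Rbar U ->
  open_R (fun x => U (mobius a b c d (Some x))).
Proof.
  intros Hdet [HUr HUi] x Hx. simpl in Hx |- *.
  destruct (Req_EM_T (c * x + d) 0) as [E|E].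
  - destruct (HUi Hx) as [M HM].
    assert (Hax : a * x + b <> 0).
    { intro E2. apply Hdet.
      replace (a * d - b * c) with (a * (c * x + d) - c * (a * x + b)) by ring.
      rewrite E, E2. ring. }
    assert (Hp : 0 < / (Rabs M + 1)) by (apply Rinv_0_lt_compat; pose proof (Rabs_pos M); lra).
    destruct (ratfun_near c d a b x _ Hax Hp) as [del [Hdel H]].
    exists del. split; auto. intros y Hy.
    destruct (Req_EM_T (c * y + d) 0) as [E2|E2]; auto.
    destruct (H y Hy) as [Hy1 Hy2]. apply HM.
    rewrite E, Rdiv_0_l, Rminus_0_r in Hy2.
    replace ((a * y + b) / (c * y + d)) with (/ ((c * y + d) / (a * y + b))) by (field; auto).
    apply Rabs_inv_gt; auto. unfold Rdiv. apply Rmult_integral_contrapositive.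
    split; [auto|apply Rinv_neq_0_compat; auto].
  - destruct (HUr _ Hx) as [eps [He HU]].
    destruct (ratfun_near a b c d x _ E He) as [del [Hdel H]].
    exists del. split; auto. intros y Hy. destruct (H y Hy) as [Hy1 Hy2].
    destruct (Req_EM_T (c * y + d) 0) as [E2|E2]; [contradiction|]. apply HU; auto.
Qed.

(* Near [None] we use [mobius a b c d = mobius b a d c \o (x |-> 1/x)], reducing to a real point. *)
Lemma mobius_continuous a b c d : a * d - b * c <> 0 -> continuous_Rbar (mobius a b c d).
Proof.
  intros Hdet U HU. split; [apply mobius_open_real; auto|].
  intros HN.
  assert (Hswap : forall z, mobius a b c d z = mobius b a d c (mobius 0 1 1 0 z)).
  { intros z. rewrite mobius_comp by lra. f_equal; ring. }
  rewrite Hswap in HN. simpl in HN.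
  destruct (Req_EM_T 1 0) as [|_]; [lra|]. rewrite Rdiv_0_l in HN.
  destruct (mobius_open_real b a d c U ltac:(lra) HU 0 HN) as [eps [He Heps]].
  exists (/ eps). intros x Hx.
  assert (Hx0 : x <> 0).
  { intros ->. rewrite Rabs_R0 in Hx. pose proof (Rinv_0_lt_compat _ He). lra. }
  rewrite Hswap. simpl.
  destruct (Req_EM_T (1 * x + 0) 0) as [|_]; [lra|].
  replace ((0 * x + 1) / (1 * x + 0)) with (/ x) by (field; auto).
  apply Heps. rewrite Rminus_0_r, Rabs_inv. rewrite <- (Rinv_inv eps).
  apply Rinv_lt_contravar; auto.
  apply Rmult_lt_0_compat; [apply Rinv_0_lt_compat; auto|apply Rabs_pos_lt; auto].
Qed.

Lemma continuous_comp (f g : Rbar -> Rbar) :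
  continuous_Rbar f -> continuous_Rbar g -> continuous_Rbar (fun z => f (g z)).
Proof. intros Hf Hg U HU. apply (Hg (fun y => U (f y))). apply Hf; auto. Qed.

Lemma is_mobius_continuous h : is_mobius h -> continuous_Rbar h.
Proof.
  intros [a [b [c [d [Hd H]]]]] U HU.
  replace (fun z => U (h z)) with (fun z => U (mobius a b c d z)).
  - apply mobius_continuous; auto.
  - apply functional_extensionality. intros z. rewrite H. reflexivity.
Qed.

Lemma real_restriction (h : Rbar -> Rbar) : h None = None ->
  (forall z1 z2, h z1 = h z2 -> z1 = z2) -> exists k : R -> R, forall x, h (Some x) = Some (k x).
Proof.
  intros HN Hinj.
  exists (fun x => match h (Some x) with Some r => r | None => 0 end). intros x.
  destruct (h (Some x)) eqn:E; [reflexivity|].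
  rewrite <- HN in E. apply Hinj in E. discriminate.
Qed.

Lemma restriction_continuity (h : Rbar -> Rbar) (k : R -> R) : continuous_Rbar h ->
  (forall x, h (Some x) = Some (k x)) -> continuity k.
Proof.
  intros Hh Hk x eps He.
  set (ball := fun z => match z with Some r => Rabs (r - k x) < eps | None => False end).
  assert (Hball : open_Rbar ball).
  { split; [|intros []].
    intros r Hr. simpl in Hr. exists (eps - Rabs (r - k x)). split; [lra|].
    intros y Hy. pose proof (Rabs_triang (y - r) (r - k x)).
    replace (y - r + (r - k x)) with (y - k x) in H by ring. simpl. lra. }
  destruct (Hh _ Hball) as [Hr _]. destruct (Hr x) as [del [Hdel H]].
  { unfold ball. rewrite Hk. unfold Rminus. rewrite Rplus_opp_r, Rabs_R0. auto. }
  exists del. split; auto. intros y [_ Hy]. simpl in Hy |- *. unfold R_dist in *.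
  specialize (H y Hy). simpl in H. rewrite Hk in H. auto.
Qed.

Lemma continuous_injective_increasing (k : R -> R) : continuity k ->
  (forall x y, k x = k y -> x = y) -> k 0 < k 1 -> forall x y, x < y -> k x < k y.
Proof.
  intros Hc Hi H01 x y Hxy.
  destruct (Rtotal_order (k x) (k y)) as [H|[E|E]]; auto; exfalso.
  - apply Hi in E. lra.
  - (* along s |-> (s x, 1 - s + s y) the two arguments of k stay distinct, yet
       k (first) - k (second) changes sign *)
    assert (HG : continuity (fun s => k (s * x) - k ((1 - s) * 1 + s * y))) by reg.
    destruct (IVT _ 0 1 HG) as [z [Hz Hz0]].
    + lra.
    + replace (0 * x) with 0 by ring. replace ((1 - 0) * 1 + 0 * y) with 1 by ring. lra.
    + replace (1 * x) with x by ring. replace ((1 - 1) * 1 + 1 * y) with y by ring. lra.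
    + assert (E2 : k (z * x) = k ((1 - z) * 1 + z * y)) by lra.
      apply Hi in E2. destruct Hz as [Hz1 Hz2].
      assert (0 <= z * (y - x)) by (apply Rmult_le_pos; lra).
      destruct (Req_dec z 1) as [->|Hz1']; lra.
Qed.

Lemma continuous_injective_monotone (k : R -> R) : continuity k ->
  (forall x y, k x = k y -> x = y) ->
  (forall x y, x < y -> k x < k y) \/ (forall x y, x < y -> k y < k x).
Proof.
  intros Hc Hi. destruct (Rtotal_order (k 0) (k 1)) as [H|[E|E]].
  - left. apply continuous_injective_increasing; auto.
  - apply Hi in E. lra.
  - right. intros x y Hxy.
    assert (Hc' : continuity (fun x => - k x)) by reg.
    assert (Hi' : forall x y, - k x = - k y -> x = y) by (intros; apply Hi; lra).
    pose proof (continuous_injective_increasing _ Hc' Hi' ltac:(lra) x y Hxy). lra.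
Qed.

Lemma pigeonhole N (b : nat -> nat) : (forall n, (n <= N)%nat -> (b n < N)%nat) ->
  exists i j, (i < j <= N)%nat /\ b i = b j.
Proof.
  revert b. induction N as [|N IH]; intros b Hb.
  - specialize (Hb 0%nat (le_n 0)). lia.
  - set (v := b (S N)).
    destruct (classic (exists i, (i <= N)%nat /\ b i = v)) as [[i [Hi Hbi]]|Hno].
    + exists i, (S N). split; [lia|auto].
    + assert (Hne : forall n, (n <= N)%nat -> b n <> v) by (intros n Hn E; apply Hno; eauto).
      assert (Hv : (v < S N)%nat) by (apply Hb; lia).
      (* squeeze the values of b on [0, N] into [0, N) by closing the gap at v *)
      set (b' := fun n => if (b n <? v)%nat then b n else (b n - 1)%nat).
      destruct (IH b') as [i [j [Hij Hb']]].
      { intros n Hn. unfold b'. pose proof (Hb n ltac:(lia)). pose proof (Hne n Hn).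
        destruct (Nat.ltb_spec (b n) v); lia. }
      exists i, j. split; [lia|]. unfold b' in Hb'.
      pose proof (Hne i ltac:(lia)). pose proof (Hne j ltac:(lia)).
      destruct (Nat.ltb_spec (b i) v); destruct (Nat.ltb_spec (b j) v); lia.
Qed.

Lemma Int_part_bounds x : IZR (Int_part x) <= x < IZR (Int_part x) + 1.
Proof. pose proof (base_Int_part x). lra. Qed.

Lemma Int_part_nonneg x : 0 <= x -> (0 <= Int_part x)%Z.
Proof.
  intros H. pose proof (Int_part_bounds x).
  assert (-1 < IZR (Int_part x)) by lra. apply lt_IZR in H1. lia.
Qed.

Lemma dirichlet_approx th N : (0 < N)%nat ->
  exists (m : nat) (p : Z), (1 <= m)%nat /\ Rabs (INR m * th - IZR p) < / INR N.
Proof.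
  intros HN.
  assert (HNpos : 0 < INR N) by (apply lt_0_INR; auto).
  set (fr := fun x => x - IZR (Int_part x)).
  assert (Hfr : forall x, 0 <= fr x < 1) by (intros x; unfold fr; pose proof (Int_part_bounds x); lra).
  set (y := fun n : nat => INR N * fr (INR n * th)).
  assert (Hy : forall n, 0 <= y n < INR N) by (intros n; unfold y; pose proof (Hfr (INR n * th)); nra).
  destruct (pigeonhole N (fun n => Z.to_nat (Int_part (y n)))) as [i [j [Hij Hb]]].
  { intros n Hn. pose proof (Hy n). pose proof (Int_part_nonneg (y n) ltac:(lra)).
    pose proof (Int_part_bounds (y n)).
    assert (IZR (Int_part (y n)) < IZR (Z.of_nat N)) by (rewrite <- INR_IZR_INZ; lra).
    apply lt_IZR in H2. lia. }
  exists (j - i)%nat, (Int_part (INR j * th) - Int_part (INR i * th))%Z. split; [lia|].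
  pose proof (Hy i). pose proof (Hy j).
  pose proof (Int_part_nonneg (y i) ltac:(lra)). pose proof (Int_part_nonneg (y j) ltac:(lra)).
  assert (Hij' : Int_part (y i) = Int_part (y j)) by lia.
  pose proof (Int_part_bounds (y i)). pose proof (Int_part_bounds (y j)). rewrite Hij' in H3.
  assert (Rabs (y j - y i) < 1) by (apply Rabs_def1; lra).
  rewrite minus_INR by lia. rewrite minus_IZR.
  replace ((INR j - INR i) * th - (IZR (Int_part (INR j * th)) - IZR (Int_part (INR i * th))))
    with ((y j - y i) / INR N) by (unfold y, fr; field; lra).
  unfold Rdiv. rewrite Rabs_mult, Rabs_inv, (Rabs_right (INR N)) by lra.
  apply Rmult_lt_reg_r with (INR N); auto. rewrite Rmult_assoc, Rinv_l by lra. lra.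
Qed.

Lemma archimedean_step c e : 0 <= c -> 0 < e -> exists q : Z, (1 <= q)%Z /\ c < IZR q * e <= c + e.
Proof.
  intros Hc He. exists (Int_part (c / e) + 1)%Z.
  assert (Hce : 0 <= c / e) by (apply Rmult_le_pos; [lra|left; apply Rinv_0_lt_compat; lra]).
  pose proof (Int_part_nonneg _ Hce). pose proof (Int_part_bounds (c / e)).
  split; [lia|]. rewrite plus_IZR.
  assert (IZR (Int_part (c / e)) * e <= c).
  { apply Rmult_le_reg_r with (/ e); [apply Rinv_0_lt_compat; lra|].
    rewrite Rmult_assoc, Rinv_r by lra. lra. }
  assert (c < (IZR (Int_part (c / e)) + 1) * e).
  { apply Rmult_lt_reg_r with (/ e); [apply Rinv_0_lt_compat; lra|].
    rewrite Rmult_assoc, Rinv_r by lra. unfold Rdiv in H0. lra. }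
  lra.
Qed.

Lemma multiples_dense_mod1 th a b : ~ rational th -> 0 <= a -> a < b -> b <= 1 ->
  exists (n : nat) (j : Z), (1 <= n)%nat /\ a < INR n * th - IZR j < b.
Proof.
  intros Hirr Ha Hab Hb.
  destruct (archimed_cor1 (b - a) ltac:(lra)) as [N [HN HN0]].
  destruct (dirichlet_approx th N HN0) as [m [p [Hm Hd]]].
  set (d := INR m * th - IZR p) in Hd.
  assert (Hd0 : d <> 0).
  { intro E. apply Hirr. exists p, (Z.of_nat m). split; [lia|].
    assert (0 < INR m) by (apply lt_0_INR; lia).
    rewrite <- INR_IZR_INZ. unfold d in E. field_simplify_eq; lra. }
  (* step towards the interval in increments of |d| < b - a, from below or from above *)
  destruct (Rlt_or_le 0 d) as [Hdp|Hdn].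
  - rewrite Rabs_right in Hd by lra.
    destruct (archimedean_step a d Ha Hdp) as [q [Hq1 Hq2]].
    exists (Z.to_nat q * m)%nat, (q * p)%Z. split; [nia|].
    rewrite mult_INR, mult_IZR, INR_IZR_INZ, Z2Nat.id by lia.
    replace (IZR q * INR m * th - IZR q * IZR p) with (IZR q * d) by (unfold d; ring). lra.
  - rewrite Rabs_left in Hd by lra.
    destruct (archimedean_step (1 - b) (- d) ltac:(lra) ltac:(lra)) as [q [Hq1 Hq2]].
    exists (Z.to_nat q * m)%nat, (q * p - 1)%Z. split; [nia|].
    rewrite mult_INR, minus_IZR, mult_IZR, INR_IZR_INZ, Z2Nat.id by lia.
    replace (IZR q * INR m * th - (IZR q * IZR p - 1)) with (1 - IZR q * (- d)) by (unfold d; ring).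
    lra.
Qed.

Definition frac (x : R) : R := x - IZR (Int_part x).

Definition cotpi (u : R) : R := cos (PI * u) / sin (PI * u).

Lemma frac_bounds x : 0 <= frac x < 1.
Proof. unfold frac. pose proof (Int_part_bounds x). lra. Qed.

Lemma frac_pos x : sin (PI * x) <> 0 -> 0 < frac x < 1.
Proof.
  intros Hs. pose proof (frac_bounds x). split; [|lra].
  destruct (Req_dec (frac x) 0) as [E|E]; [|lra]. exfalso. apply Hs, sin_eq_0_1.
  exists (Int_part x). unfold frac in E. replace x with (IZR (Int_part x)) at 1 by lra. ring.
Qed.

Lemma frac_succ_cases th n :
  let c := (Int_part (INR (S n) * th) - Int_part (INR n * th) - Int_part th)%Z in
  (c = 1%Z /\ frac (INR (S n) * th) < frac (INR n * th)) \/
  (c = 0%Z /\ frac (INR n * th) <= frac (INR (S n) * th)).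
Proof.
  intros c.
  assert (E : frac (INR (S n) * th) = frac (INR n * th) + frac th - IZR c).
  { unfold frac, c. rewrite !minus_IZR, S_INR. ring. }
  pose proof (frac_bounds (INR (S n) * th)). pose proof (frac_bounds (INR n * th)).
  pose proof (frac_bounds th).
  assert (IZR c < 2) by lra. assert (-1 < IZR c) by lra.
  apply lt_IZR in H2. apply lt_IZR in H3.
  assert (c = 0 \/ c = 1)%Z as [-> | ->] by lia; [right|left]; split; auto; rewrite E; lra.
Qed.

(* The relative order of the points [frac (n th)], n >= 1, determines every carry
   [Int_part ((n+1) th) - Int_part (n th) - Int_part th], hence [n * frac th] up to an
   integer for all n, hence [frac th]. *)
Lemma frac_eq_of_same_order th ph :
  (forall n m, (1 <= n)%nat -> (1 <= m)%nat ->
     (frac (INR n * th) < frac (INR m * th) <-> frac (INR n * ph) < frac (INR m * ph))) ->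
  frac th = frac ph.
Proof.
  intros Hord.
  set (D := fun x n => IZR (Int_part (INR n * x)) - INR n * IZR (Int_part x)).
  assert (HD : forall n, D th (S n) = D ph (S n)).
  { induction n as [|n IH].
    - unfold D. simpl INR. rewrite !Rmult_1_l. ring.
    - assert (Hs : forall x, D x (S (S n)) = D x (S n) +
         IZR (Int_part (INR (S (S n)) * x) - Int_part (INR (S n) * x) - Int_part x)).
      { intros x. unfold D. rewrite !minus_IZR, (S_INR (S n)). ring. }
      rewrite !Hs, IH. f_equal. f_equal.
      pose proof (frac_succ_cases th (S n)) as Ct. pose proof (frac_succ_cases ph (S n)) as Cp.
      cbv zeta in Ct, Cp.
      pose proof (Hord (S (S n)) (S n) ltac:(lia) ltac:(lia)) as Hn.
      destruct Ct as [[E1 L1]|[E1 L1]]; destruct Cp as [[E2 L2]|[E2 L2]];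
        rewrite ?E1, ?E2; auto; exfalso.
      + apply Hn in L1. lra.
      + apply Hn in L2. lra. }
  set (Dl := frac th - frac ph).
  assert (Hb : forall n, Rabs (INR (S n) * Dl) < 1).
  { intros n. replace (INR (S n) * Dl) with (frac (INR (S n) * th) - frac (INR (S n) * ph)).
    - pose proof (frac_bounds (INR (S n) * th)). pose proof (frac_bounds (INR (S n) * ph)).
      apply Rabs_def1; lra.
    - pose proof (HD n) as Hn. unfold D in Hn. unfold Dl, frac. lra. }
  destruct (Req_dec Dl 0) as [E|E]; [unfold Dl in E; lra|].
  exfalso. destruct (archimed_cor1 (Rabs Dl) (Rabs_pos_lt _ E)) as [N [HN HN0]].
  destruct N as [|N]; [lia|]. specialize (Hb N).
  rewrite Rabs_mult, (Rabs_right (INR (S N))) in Hb by (apply Rle_ge, pos_INR).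
  assert (0 < INR (S N)) by (apply lt_0_INR; lia).
  apply (Rmult_lt_compat_l (INR (S N))) in HN; auto. rewrite Rinv_r in HN by lra. lra.
Qed.

Lemma sin_mult_neq0 al n : ~ rational (al / PI) -> (1 <= n)%nat -> sin (INR n * al) <> 0.
Proof.
  intros Hirr Hn E. apply sin_eq_0_0 in E. destruct E as [z Hz]. apply Hirr.
  exists z, (Z.of_nat n). split; [lia|]. rewrite <- INR_IZR_INZ.
  assert (0 < INR n) by (apply lt_0_INR; lia). pose proof PI_RGT_0.
  replace (al / PI) with (INR n * al / PI / INR n) by (field; lra). rewrite Hz. field. lra.
Qed.

Lemma frac_mult_pos th : ~ rational (th / PI) ->
  forall n, (1 <= n)%nat -> 0 < frac (INR n * (th / PI)) < 1.
Proof.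
  intros Hirr n Hn. pose proof PI_RGT_0. apply frac_pos.
  replace (PI * (INR n * (th / PI))) with (INR n * th) by (field; lra).
  apply sin_mult_neq0; auto.
Qed.

Lemma angle_point_frac x : angle_point (PI * x) = angle_point (PI * frac x).
Proof.
  rewrite <- (angle_point_period (PI * frac x) (Int_part x)). f_equal. unfold frac. ring.
Qed.

Lemma sin_PI_pos u : 0 < u < 1 -> 0 < sin (PI * u).
Proof. intros H. pose proof PI_RGT_0. apply sin_gt_0; nra. Qed.

Lemma angle_point_cotpi u : 0 < u < 1 -> angle_point (PI * u) = Some (cotpi u).
Proof.
  intros H. unfold angle_point, proj_point, cotpi. pose proof (sin_PI_pos u H).
  destruct (Req_EM_T (sin (PI * u)) 0); [lra|reflexivity].
Qed.

Lemma cotpi_decreasing u v : 0 < u -> u < v -> v < 1 -> cotpi v < cotpi u.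
Proof.
  intros Hu Huv Hv. unfold cotpi. pose proof PI_RGT_0.
  assert (su : 0 < sin (PI * u)) by (apply sin_PI_pos; lra).
  assert (sv : 0 < sin (PI * v)) by (apply sin_PI_pos; lra).
  assert (svu : 0 < sin (PI * v - PI * u)) by (apply sin_gt_0; nra).
  rewrite sin_minus in svu.
  assert (E : cos (PI * u) / sin (PI * u) - cos (PI * v) / sin (PI * v) =
    (sin (PI * v) * cos (PI * u) - cos (PI * v) * sin (PI * u)) / (sin (PI * u) * sin (PI * v)))
    by (field; lra).
  assert (0 < (sin (PI * v) * cos (PI * u) - cos (PI * v) * sin (PI * u)) /
              (sin (PI * u) * sin (PI * v))) by (apply Rdiv_lt_0_compat; nra).
  lra.
Qed.

Lemma cotpi_atan y : cotpi (/ 2 - atan y / PI) = y.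
Proof.
  unfold cotpi. pose proof PI_RGT_0.
  replace (PI * (/ 2 - atan y / PI)) with (PI / 2 - atan y) by (field; lra).
  rewrite cos_shift, sin_shift. apply atan_right_inv.
Qed.

Lemma increasing_lt_iff (k : R -> R) : (forall x y, x < y -> k x < k y) ->
  forall x y, x < y <-> k x < k y.
Proof.
  intros Hk x y. split; auto. intros H.
  destruct (Rtotal_order x y) as [|[E|E]]; auto.
  - subst. lra.
  - apply Hk in E. lra.
Qed.

Lemma cotpi_lt_iff u v : 0 < u < 1 -> 0 < v < 1 -> u < v <-> cotpi v < cotpi u.
Proof.
  intros Hu Hv. split; [intros; apply cotpi_decreasing; lra|]. intros H.
  destruct (Rtotal_order u v) as [|[E|E]]; auto.
  - subst. lra.
  - pose proof (cotpi_decreasing v u ltac:(lra) E ltac:(lra)). lra.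
Qed.

Section IncreasingRotationConjugacy.

Variables (th ph : R) (h : Rbar -> Rbar) (k : R -> R).
Hypothesis th_irrational : ~ rational (th / PI).
Hypothesis h_None : h None = None.
Hypothesis h_Some : forall x, h (Some x) = Some (k x).
Hypothesis k_increasing : forall x y, x < y -> k x < k y.
Hypothesis h_rot : forall z, h (rot th z) = rot ph (h z).

Lemma conj_orbit n : h (angle_point (INR n * th)) = angle_point (INR n * ph).
Proof.
  induction n as [|n IH].
  - simpl. rewrite !Rmult_0_l, angle_point_0. apply h_None.
  - rewrite S_INR, !Rmult_plus_distr_r, !Rmult_1_l, <- !rot_angle_point, h_rot, IH.
    reflexivity.
Qed.

Lemma conj_orbit_cotpi n : (1 <= n)%nat ->
  0 < frac (INR n * (ph / PI)) < 1 /\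
  k (cotpi (frac (INR n * (th / PI)))) = cotpi (frac (INR n * (ph / PI))).
Proof.
  intros Hn. pose proof PI_RGT_0. pose proof (conj_orbit n) as Ho.
  replace (INR n * th) with (PI * (INR n * (th / PI))) in Ho by (field; lra).
  replace (INR n * ph) with (PI * (INR n * (ph / PI))) in Ho by (field; lra).
  pose proof (frac_mult_pos th th_irrational n Hn) as Hth.
  rewrite angle_point_frac, angle_point_cotpi, h_Some in Ho by auto.
  assert (Hph : 0 < frac (INR n * (ph / PI)) < 1).
  { apply frac_pos. intro E. apply angle_point_None in E. congruence. }
  rewrite angle_point_frac, angle_point_cotpi in Ho by auto.
  split; [auto|congruence].
Qed.

(* The cyclic orders of the two orbits agree, so the rotation numbers th/PI and ph/PI
   agree mod 1. *)
Lemma conj_angle_shift : exists z : Z, ph = th + IZR z * PI.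
Proof.
  pose proof PI_RGT_0.
  pose proof (frac_mult_pos th th_irrational) as Hfa.
  assert (Hfr : frac (th / PI) = frac (ph / PI)).
  { apply frac_eq_of_same_order. intros n m Hn Hm.
    destruct (conj_orbit_cotpi n Hn) as [Hn1 Hn2].
    destruct (conj_orbit_cotpi m Hm) as [Hm1 Hm2].
    rewrite (cotpi_lt_iff _ _ (Hfa n Hn) (Hfa m Hm)), (increasing_lt_iff k k_increasing), Hn2, Hm2.
    symmetry. apply cotpi_lt_iff; auto. }
  exists (Int_part (ph / PI) - Int_part (th / PI))%Z. unfold frac in Hfr.
  rewrite minus_IZR.
  replace ph with (PI * (ph / PI)) at 1 by (field; lra).
  replace th with (PI * (th / PI)) at 1 by (field; lra).
  nra.
Qed.

Lemma conj_orbit_fixed n : h (angle_point (INR n * th)) = angle_point (INR n * th).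
Proof.
  destruct conj_angle_shift as [z Hz].
  rewrite conj_orbit, Hz, <- (angle_point_period (INR n * th) (Z.of_nat n * z)).
  f_equal. rewrite mult_IZR, <- INR_IZR_INZ. ring.
Qed.

Lemma conj_dense_fixed y1 y2 : y1 < y2 -> exists w, y1 < w < y2 /\ k w = w.
Proof.
  intros Hy. pose proof PI_RGT_0.
  pose proof (atan_bound y1). pose proof (atan_bound y2). pose proof (atan_increasing _ _ Hy).
  set (a := / 2 - atan y2 / PI). set (b := / 2 - atan y1 / PI).
  assert (Ha : 0 < a) by (unfold a; apply (Rmult_lt_reg_r PI); auto; field_simplify; lra).
  assert (Hab : a < b) by (unfold a, b; apply (Rmult_lt_reg_r PI); auto; field_simplify; lra).
  assert (Hb : b < 1) by (unfold b; apply (Rmult_lt_reg_r PI); auto; field_simplify; lra).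
  destruct (multiples_dense_mod1 (th / PI) a b th_irrational ltac:(lra) Hab ltac:(lra)) as [n [j [Hn Hnj]]].
  set (u := INR n * (th / PI) - IZR j) in Hnj.
  exists (cotpi u). split.
  - rewrite <- (cotpi_atan y1), <- (cotpi_atan y2). fold a b.
    split; apply cotpi_decreasing; lra.
  - assert (Hu : angle_point (PI * u) = angle_point (INR n * th)).
    { rewrite <- (angle_point_period (INR n * th) (- j)). f_equal. unfold u.
      rewrite opp_IZR. field. lra. }
    pose proof (conj_orbit_fixed n) as Hfix. rewrite <- Hu, angle_point_cotpi, h_Some in Hfix by lra.
    congruence.
Qed.

Lemma conj_increasing_id x : k x = x.
Proof.
  destruct (Rtotal_order (k x) x) as [Hl|[E|Hg]]; auto; exfalso.
  - destruct (conj_dense_fixed _ _ Hl) as [w [[Hw1 Hw2] Hkw]].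
    apply k_increasing in Hw2. lra.
  - destruct (conj_dense_fixed _ _ Hg) as [w [[Hw1 Hw2] Hkw]].
    apply k_increasing in Hw1. lra.
Qed.

End IncreasingRotationConjugacy.

Lemma rot_conj_fixing_None th ph (h : Rbar -> Rbar) : ~ rational (th / PI) ->
  continuous_Rbar h -> (forall z1 z2, h z1 = h z2 -> z1 = z2) -> h None = None ->
  (forall z, h (rot th z) = rot ph (h z)) ->
  (forall z, h z = z) \/ (forall z, h z = Rbar_opp z).
Proof.
  intros Hirr Hcont Hinj HN Hrot.
  destruct (real_restriction h HN Hinj) as [k Hk].
  assert (Hkc : continuity k) by (apply (restriction_continuity h); auto).
  assert (Hki : forall x y, k x = k y -> x = y).
  { intros x y E. assert (Some x = Some y) by (apply Hinj; rewrite !Hk, E; reflexivity).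
    congruence. }
  destruct (continuous_injective_monotone k Hkc Hki) as [Hinc|Hdec].
  - left. intros [x|]; [|auto]. rewrite Hk. f_equal.
    apply (conj_increasing_id th ph h k); auto.
  - right. intros [x|]; [|auto]. rewrite Hk. simpl. f_equal.
    (* composing with [Rbar_opp] makes the restriction increasing *)
    enough (- k x = x) by lra.
    apply (conj_increasing_id th (- ph) (fun z => Rbar_opp (h z)) (fun x => - k x)); auto.
    + rewrite HN. reflexivity.
    + intros y. rewrite Hk. reflexivity.
    + intros y1 y2 Hy. apply Hdec in Hy. lra.
    + intros z. rewrite Hrot. apply Rbar_opp_rot.
Qed.

Lemma is_mobius_ext h h' : (forall z, h z = h' z) -> is_mobius h' -> is_mobius h.
Proof.
  intros E [a [b [c [d [Hd H]]]]]. exists a, b, c, d. split; auto.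
  intros z. rewrite E. apply H.
Qed.

Lemma rot_conj_is_mobius th ph (h : Rbar -> Rbar) : ~ rational (th / PI) ->
  continuous_Rbar h -> (forall z1 z2, h z1 = h z2 -> z1 = z2) ->
  (forall z, h (rot th z) = rot ph (h z)) -> is_mobius h.
Proof.
  intros Hirr Hcont Hinj Hrot.
  destruct (angle_point_surj (h None)) as [c Hc].
  set (h1 := fun z => rot (- c) (h z)).
  assert (Hh1 : forall z, h z = rot c (h1 z)) by (intros z; unfold h1; rewrite rot_cancel; auto).
  assert (Hmob : is_mobius h1).
  { destruct (rot_conj_fixing_None th ph h1 Hirr) as [E|E].
    - unfold h1. apply continuous_comp; [apply is_mobius_continuous, is_mobius_rot|exact Hcont].
    - intros z1 z2 E. apply Hinj. rewrite Hh1, E, <- Hh1. reflexivity.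
    - unfold h1. rewrite Hc, rot_angle_point, Rplus_opp_r. apply angle_point_0.
    - intros z. unfold h1. rewrite Hrot, !rot_comp, Rplus_comm. reflexivity.
    - apply (is_mobius_ext h1 (fun z => z) E), is_mobius_id.
    - apply (is_mobius_ext h1 Rbar_opp E), is_mobius_Rbar_opp. }
  apply (is_mobius_ext h (fun z => rot c (h1 z)) Hh1), is_mobius_comp; [apply is_mobius_rot|exact Hmob].
Qed.

Lemma eigenvector_det_neq0 a b c d u v x1 y1 x2 y2 : v <> 0 ->
  ~ (x1 = 0 /\ y1 = 0 /\ x2 = 0 /\ y2 = 0) ->
  a * x1 + b * x2 = u * x1 - v * y1 ->
  a * y1 + b * y2 = u * y1 + v * x1 ->
  c * x1 + d * x2 = u * x2 - v * y2 ->
  c * y1 + d * y2 = u * y2 + v * x2 -> x1 * y2 - y1 * x2 <> 0.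
Proof.
  intros Hv Hnz H1 H2 H3 H4 E.
  assert (Ea : v * (x1 * x1 + y1 * y1) = b * (x1 * y2 - y1 * x2)).
  { transitivity (x1 * (v * x1) + y1 * (v * y1)); [ring|].
    replace (v * x1) with (a * y1 + b * y2 - u * y1) by lra.
    replace (v * y1) with (u * x1 - a * x1 - b * x2) by lra. ring. }
  assert (Eb : v * (x2 * x2 + y2 * y2) = - c * (x1 * y2 - y1 * x2)).
  { transitivity (x2 * (v * x2) + y2 * (v * y2)); [ring|].
    replace (v * x2) with (c * y1 + d * y2 - u * y2) by lra.
    replace (v * y2) with (u * x2 - c * x1 - d * x2) by lra. ring. }
  rewrite E, Rmult_0_r in Ea, Eb. apply Hnz.
  assert (x1 * x1 + y1 * y1 = 0) by (apply (Rmult_eq_reg_l v); lra).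
  assert (x2 * x2 + y2 * y2 = 0) by (apply (Rmult_eq_reg_l v); lra).
  repeat split; nra.
Qed.

(* In the real basis (x, y) of an eigenvector [x + i y] for the eigenvalue [r e^(-i be)],
   the matrix acts as [r] times the rotation by [be]. *)
Lemma complex_eigenvalue_rot_conj a b c d r be :
  complex_eigenvalue a b c d (r * cos be) (- (r * sin be)) -> r <> 0 -> sin be <> 0 ->
  exists S, is_mobius S /\ forall z, mobius a b c d (S z) = S (rot be z).
Proof.
  intros [x1 [y1 [x2 [y2 [Hnz [H1 [H2 [H3 H4]]]]]]]] Hr Hbe.
  assert (Hdet : x1 * y2 - y1 * x2 <> 0).
  { apply (eigenvector_det_neq0 a b c d (r * cos be) (- (r * sin be)) x1 y1 x2 y2); auto.
    intro E. apply Ropp_eq_0_compat in E. rewrite Ropp_involutive in E.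
    destruct (Rmult_integral _ _ E); auto. }
  exists (mobius x1 y1 x2 y2). split; [exists x1, y1, x2, y2; auto|].
  intros z. destruct (angle_point_surj z) as [t ->].
  rewrite rot_angle_point. unfold angle_point.
  rewrite !(mobius_proj_point x1 y1 x2 y2) by apply cos_sin_not_both_0.
  rewrite mobius_proj_point by (apply mat_vec_neq0; [auto|apply cos_sin_not_both_0]).
  rewrite cos_plus, sin_plus.
  match goal with |- _ = proj_point ?X ?Y =>
    rewrite <- (proj_point_scale r X Y) by auto end.
  f_equal.
  - transitivity (cos t * (a * x1 + b * x2) + sin t * (a * y1 + b * y2)); [ring|].
    rewrite H1, H2. ring.
  - transitivity (cos t * (c * x1 + d * x2) + sin t * (c * y1 + d * y2)); [ring|].
    rewrite H3, H4. ring.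
Qed.

Lemma polar_coordinates u v : 0 < v -> exists r be, 0 < r /\ u = r * cos be /\ v = r * sin be.
Proof.
  intros Hv. set (s := sqrt (1 + (u / v)²)).
  assert (Hs : 0 < s) by (unfold s; apply sqrt_lt_R0; pose proof (Rle_0_sqr (u / v)); lra).
  exists (v * s), (PI / 2 - atan (u / v)). split; [nra|].
  rewrite cos_shift, sin_shift, sin_atan, cos_atan. fold s. split; field; lra.
Qed.

Lemma no_fixed_point_disc_neg q1 q2 q3 q4 : q1 * q4 - q2 * q3 <> 0 ->
  (forall z, mobius q1 q2 q3 q4 z <> z) -> (q4 - q1) * (q4 - q1) + 4 * q2 * q3 < 0.
Proof.
  intros Hdet Hfree.
  assert (Hq3 : q3 <> 0).
  { intro E. apply (Hfree None). simpl. destruct (Req_EM_T q3 0); [reflexivity|contradiction]. }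
  destruct (Rlt_or_le ((q4 - q1) * (q4 - q1) + 4 * q2 * q3) 0) as [H|H]; auto. exfalso.
  set (D := (q4 - q1) * (q4 - q1) + 4 * q2 * q3) in H.
  set (s := sqrt D). assert (Hs : s * s = D) by (apply sqrt_sqrt; auto).
  set (x := ((q1 - q4) + s) / (2 * q3)).
  assert (Hx : q3 * x * x + (q4 - q1) * x - q2 = 0).
  { apply (Rmult_eq_reg_l (4 * q3)); [|lra]. unfold x. field_simplify; [|auto].
    unfold D in Hs. nra. }
  apply (Hfree (Some x)). simpl. destruct (Req_EM_T (q3 * x + q4) 0) as [E|E].
  - exfalso. apply (mat_vec_neq0 q1 q2 q3 q4 x 1 Hdet ltac:(lra)). split; nra.
  - f_equal. field_simplify_eq; auto. nra.
Qed.

Lemma no_fixed_point_rot_conj q1 q2 q3 q4 : q1 * q4 - q2 * q3 <> 0 ->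
  (forall z, mobius q1 q2 q3 q4 z <> z) ->
  exists S be, is_mobius S /\ forall z, mobius q1 q2 q3 q4 (S z) = S (rot be z).
Proof.
  intros Hdet Hfree. pose proof (no_fixed_point_disc_neg _ _ _ _ Hdet Hfree) as Hdisc.
  set (u := (q1 + q4) / 2).
  set (v := sqrt (- ((q4 - q1) * (q4 - q1) + 4 * q2 * q3)) / 2).
  assert (Hv : 0 < v) by (unfold v; apply Rdiv_lt_0_compat; [apply sqrt_lt_R0|]; lra).
  assert (Hvv : v * v = - ((q4 - q1) * (q4 - q1) + 4 * q2 * q3) / 4).
  { unfold v. rewrite <- (sqrt_sqrt (- ((q4 - q1) * (q4 - q1) + 4 * q2 * q3))) at 3 by lra.
    field. }
  destruct (polar_coordinates u v Hv) as [r [be [Hr [Hu Hv']]]].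
  assert (Heig : complex_eigenvalue q1 q2 q3 q4 (r * cos be) (- (r * sin be))).
  { rewrite <- Hu, <- Hv'. exists q2, 0, (u - q1), (- v).
    split; [lra|]. unfold u in *. repeat split; nra. }
  assert (Hbe : sin be <> 0) by (intro E; rewrite E, Rmult_0_r in Hv'; lra).
  destruct (complex_eigenvalue_rot_conj _ _ _ _ _ _ Heig ltac:(lra) Hbe) as [S [HS HQS]].
  exists S, be. auto.
Qed.

Lemma rot_conj_no_fixed_point (M S : Rbar -> Rbar) be : is_mobius S -> sin be <> 0 ->
  (forall z, M (S z) = S (rot be z)) -> forall w, M w <> w.
Proof.
  intros HS Hbe HMS w Hw. destruct (is_mobius_inv S HS) as [Si [_ [HSiS HSSi]]].
  apply (rot_no_fixed_point be (Si w) Hbe).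
  rewrite <- (HSiS (rot be (Si w))), <- HMS, HSSi, Hw. reflexivity.
Qed.

(* [heig2] alone makes P1 conjugate to a rotation. *)
Theorem theorem12p6
  (p1 p2 p3 p4 q1 q2 q3 q4 alpha : R)
  (hP : p1 * p4 - p2 * p3 <> 0)
  (hQ : q1 * q4 - q2 * q3 <> 0)
  (halpha : - (PI / 2) < alpha <= PI / 2)
  (hirr : ~ rational (alpha / PI))
  (heig1 : complex_eigenvalue p1 p2 p3 p4 (cos alpha) (sin alpha))
  (heig2 : complex_eigenvalue p1 p2 p3 p4 (cos alpha) (- sin alpha))
  (f : Rbar -> Rbar)
  (hf : homeomorphism_Rbar f)
  (hconj : forall x : Rbar, f (mobius p1 p2 p3 p4 x) = mobius q1 q2 q3 q4 (f x)) :
  exists a b c d : R, a * d - b * c <> 0 /\ forall x : Rbar, f x = mobius a b c d x.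
Proof.
  destruct hf as [g [Hgf [Hfg [Hfcont _]]]].
  assert (Hsin : sin alpha <> 0).
  { pose proof (sin_mult_neq0 alpha 1 hirr (le_n 1)) as H. simpl INR in H. rewrite Rmult_1_l in H. auto. }
  destruct (complex_eigenvalue_rot_conj p1 p2 p3 p4 1 alpha) as [S [HS HPS]]; auto.
  { rewrite !Rmult_1_l. exact heig2. }
  assert (HQfree : forall y, mobius q1 q2 q3 q4 y <> y).
  { intros y Hy. apply (rot_conj_no_fixed_point _ S alpha HS Hsin HPS (g y)).
    rewrite <- (Hgf (mobius p1 p2 p3 p4 (g y))), hconj, Hfg, Hy. reflexivity. }
  destruct (no_fixed_point_rot_conj q1 q2 q3 q4 hQ HQfree) as [T [be [HT HQT]]].
  destruct (is_mobius_inv T HT) as [Ti [HTi [HTiT HTTi]]].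
  destruct (is_mobius_inv S HS) as [Si [HSi [HSiS HSSi]]].
  assert (Hh : is_mobius (fun z => Ti (f (S z)))).
  { apply (rot_conj_is_mobius alpha be); auto.
    - apply continuous_comp; [apply is_mobius_continuous; auto|].
      apply continuous_comp; [auto|apply is_mobius_continuous; auto].
    - intros z1 z2 E. rewrite <- (HSiS z1), <- (HSiS z2), <- (Hgf (S z1)), <- (Hgf (S z2)).
      rewrite <- (HTTi (f (S z1))), <- (HTTi (f (S z2))), E. reflexivity.
    - intros z. rewrite <- HPS, hconj, <- (HTTi (f (S z))), HQT, !HTiT. reflexivity. }
  apply (is_mobius_ext f (fun z => T (Ti (f (S (Si z)))))).
  - intros z. rewrite HTTi, HSSi. reflexivity.
  - apply is_mobius_comp; auto. apply (is_mobius_comp (fun z => Ti (f (S z)))); auto.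
Qed.
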